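(* Let $n=5$, $x_i=i$ for $i=1,\dots,5$, and $Y_i=\beta_0+\beta_1x_i+\varepsilon_i$ with unknown $\beta_0,\beta_1\in\mathbb{R}$ and $\varepsilon_1,\dots,\varepsilon_5$ i.i.d. with a continuous distribution that is symmetric about $0$. Let $s_1<s_2<\cdots<s_{10}$ be the ten slopes $S_{ij}=(Y_i-Y_j)/(x_i-x_j)$, $i<j$, sorted increasingly. Define $p_2=P(\beta_1\in(s_2,s_{10})\wedge 2s_2\le s_1+s_9\wedge 2s_9<s_2+s_{10})$ and $p_3=P(\beta_1\in(s_1,s_9)\wedge s_1+s_9<2s_2\wedge s_2+s_{10}\le 2s_9)$. Then $p_2=p_3$.
   Context: Ties among the slopes occur with probability zero and are ignored. *)

From HB Require Import structures.
From mathcomp Require Import all_boot all_order all_algebra.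
From mathcomp Require Import all_classical all_reals all_analysis.
Set Implicit Arguments. Unset Strict Implicit. Unset Printing Implicit Defensive.
Import Order.TTheory GRing.Theory Num.Theory.
Local Open Scope classical_set_scope.
Local Open Scope ring_scope.

(* Design points x_i = i for i = 1..5; index i : 'I_5 stands for i+1. *)
Definition xs {R : realType} (i : 'I_5) : R := (i.+1)%:R.

Definition Ys {R : realType} (b0 b1 : R) (e : 'I_5 -> R) (i : 'I_5) : R :=
  b0 + b1 * xs i + e i.

Definition slopes {R : realType} (y : 'I_5 -> R) : seq R :=
  [seq (y ij.1 - y ij.2) / (xs ij.1 - xs ij.2)
  | ij <- [seq ij <- [seq (i, j) | i <- enum 'I_5, j <- enum 'I_5]
          | (val ij.1 < val ij.2)%N]].

(* k-th smallest slope s_k (1-based), from the increasingly sorted list. *)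
Definition sslope {R : realType} (y : 'I_5 -> R) (k : nat) : R :=
  nth 0 (sort <=%R (slopes y)) k.-1.

(* Mutual independence of a finite family of real random variables:
   the joint law factorizes on all measurable rectangles (taking B_i = setT
   covers every subfamily). *)
Definition mutually_independent {d : measure_display} {T : measurableType d}
  {R : realType} (P : probability T R) {n : nat} (X : 'I_n -> {RV P >-> R}) :=
  forall B : 'I_n -> set R, (forall i, measurable (B i)) ->
    P (\bigcap_(i in [set: 'I_n]) (X i @^-1` B i)) =
    (\prod_(i < n) P (X i @^-1` B i))%E.

Definition event_p2 {T : Type} {R : realType} (b0 b1 : R) (eps : 'I_5 -> T -> R)
  : set T :=
  [set w | let s := sslope (Ys b0 b1 (fun i => eps i w)) in
     [/\ s 2 < b1 < s 10, 2 * s 2 <= s 1 + s 9 & 2 * s 9 < s 2 + s 10]].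

Definition event_p3 {T : Type} {R : realType} (b0 b1 : R) (eps : 'I_5 -> T -> R)
  : set T :=
  [set w | let s := sslope (Ys b0 b1 (fun i => eps i w)) in
     [/\ s 1 < b1 < s 9, s 1 + s 9 < 2 * s 2 & s 2 + s 10 <= 2 * s 9]].

From HB Require Import structures.
From mathcomp Require Import all_boot all_order all_algebra.
From mathcomp Require Import all_classical all_reals all_analysis.
From mathcomp Require Import measurable_realfun.
From mathcomp Require Import ring lra zify.
Import Order.TTheory GRing.Theory Num.Theory.
Local Open Scope classical_set_scope.
Local Open Scope ring_scope.

(* Reflecting the noise, e |-> -e, replaces every slope S_ij by 2 b1 - S_ij
   and so reverses the sorted slopes: s_k becomes 2 b1 - s_(11-k).  Under this
   substitution the event defining p_3 becomes the event defining p_2.  The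
   errors being independent and each symmetric, the noise vector and its
   reflection agree on boxes, which generate the sigma-algebra of R^5, so they
   have the same joint law and the two events have the same probability. *)

(* MathComp's [sort] is a merge sort; insertion sort computes the same list and
   makes the measurability of the order statistics a simple induction. *)
Section insertion_sort.
Context {disp : Order.disp_t} {T : orderType disp}.
Implicit Types (a x y : T) (s : seq T).
Local Open Scope order_scope.

Fixpoint insort a s : seq T :=
  if s is x :: s' then (if a <= x then a :: s else x :: insort a s') else [:: a].

Definition insertion_sort s : seq T := foldr insort [::] s.

Lemma path_insort y a s : y <= a -> path <=%O y s -> path <=%O y (insort a s).
Proof.
elim: s y => [|x s IHs] y ya /=; first by rewrite ya.
move=> /andP[yx xs]; case: ifP => ax /=; first by rewrite ya ax.
by rewrite yx IHs // ltW // ltNge ax.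
Qed.

Lemma sorted_insort a s : sorted <=%O s -> sorted <=%O (insort a s).
Proof.
case: s => [//|x s] /= xs; case: ifP => ax /=; first by rewrite ax.
by rewrite path_insort // ltW // ltNge ax.
Qed.

Lemma perm_insort a s : perm_eq (insort a s) (a :: s).
Proof.
elim: s => [//|x s IHs] /=; case: ifP => _ //.
apply: (@perm_trans _ (x :: a :: s)); first by rewrite perm_cons.
by rewrite (perm_catCA [:: x] [:: a] s).
Qed.

Lemma sorted_insertion_sort s : sorted <=%O (insertion_sort s).
Proof. by elim: s => [//|x s IHs] /=; apply: sorted_insort. Qed.

Lemma perm_insertion_sort s : perm_eq (insertion_sort s) s.
Proof.
by elim: s => [//|x s IHs] /=; rewrite (perm_trans (perm_insort _ _)) ?perm_cons.
Qed.

Lemma sort_insertion_sort s : sort <=%O s = insertion_sort s.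
Proof.
apply: (sorted_eq le_trans le_anti); rewrite ?sort_sorted ?sorted_insertion_sort //.
  exact: le_total.
by rewrite perm_sort perm_sym perm_insertion_sort.
Qed.

Lemma sort_map_nonincr (f : T -> T) s : {homo f : x y /~ x <= y} ->
  sort <=%O (map f s) = rev (map f (sort <=%O s)).
Proof.
move=> f_nonincr; apply: (sorted_eq le_trans le_anti).
- by rewrite sort_sorted //; exact: le_total.
- rewrite rev_sorted; apply: (homo_sorted (e := <=%O)); first by move=> x y /f_nonincr.
  by apply: sort_sorted; exact: le_total.
- by rewrite perm_sort perm_sym perm_rev perm_map // perm_sort.
Qed.

End insertion_sort.

Section measurable_sort.
Context {d} {X : measurableType d} {R : realType}.

Lemma measurable_nth_insort n (s : X -> seq R) (a : X -> R) :
  (forall x, size (s x) = n) ->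
  (forall k, measurable_fun setT (fun x => nth 0 (s x) k)) ->
  measurable_fun setT a ->
  forall k, measurable_fun setT (fun x => nth 0 (insort (a x) (s x)) k).
Proof.
elim: n s => [|n IHn] s size_s ms ma k.
  have s0 x : s x = [::] by apply/eqP; rewrite -size_eq0 size_s.
  by under eq_fun do rewrite s0; case: k => [|k] //=; exact: measurable_cst.
pose h x := nth 0 (s x) 0; pose t x := behead (s x).
have s_ht x : s x = h x :: t x by rewrite /h /t; have := size_s x; case: (s x).
have mt k' : measurable_fun setT (fun x => nth 0 (t x) k').
  by under eq_fun do rewrite /t nth_behead; exact: ms.
rewrite (_ : (fun x => _) = fun x => if a x <= h x then nth 0 [:: a x, h x & t x] k
   else nth 0 (h x :: insort (a x) (t x)) k); last first.
  by apply/funext => x; rewrite s_ht /=; case: ifP.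
have mh : measurable_fun setT h by exact: ms.
apply: measurable_fun_ifT; first exact: measurable_fun_ler.
  by case: k => [|[|k]] //=.
case: k => [|k] //=; apply: IHn => // x.
by rewrite /t size_behead size_s.
Qed.

Lemma measurable_nth_sort {I : Type} (h : I -> X -> R) (l : seq I) :
  (forall i, measurable_fun setT (h i)) ->
  forall k, measurable_fun setT (fun x => nth 0 (sort <=%R [seq h i x | i <- l]) k).
Proof.
move=> mh k; under eq_fun do rewrite sort_insertion_sort.
elim: l k => [|i l IHl] k /=.
  by under eq_fun do rewrite nth_nil; exact: measurable_cst.
apply: (@measurable_nth_insort (size l)) => // x.
by rewrite (perm_size (perm_insertion_sort _)) size_map.
Qed.

End measurable_sort.

(* The alias carries the pointed choice structure that [g_sigma_algebraType]
   needs in order to put the box sigma-algebra on ['I_n -> R]. *)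
Definition vec (n : nat) (R : Type) := 'I_n -> R.
HB.instance Definition _ n (R : realType) := gen_eqMixin (vec n R).
HB.instance Definition _ n (R : realType) := gen_choiceMixin (vec n R).
HB.instance Definition _ n (R : realType) := isPointed.Build (vec n R) (fun _ => 0).

Section boxes.
Context (R : realType) (n : nat).

Definition box (B : 'I_n -> set R) : set (vec n R) := [set e | forall i, B i (e i)].

Definition boxes : set (set (vec n R)) :=
  [set box B | B in [set B | forall i, measurable (B i)]].

Local Notation E := (g_sigma_algebraType boxes).

Lemma setI_closed_boxes : setI_closed boxes.
Proof.
move=> _ _ [B mB <-] [C mC <-]; exists (fun i => B i `&` C i).
  by move=> i; apply: measurableI.
apply/seteqP; split => e /=.
  by move=> BCe; split => i; case: (BCe i).
by move=> [Be Ce] i; split.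
Qed.

Lemma preimage_box (U : Type) (f : 'I_n -> U -> R) (B : 'I_n -> set R) :
  (fun u => (fun i => f i u) : vec n R) @^-1` box B =
  \bigcap_(i in [set: 'I_n]) (f i @^-1` B i).
Proof. by apply/seteqP; split => u /= fB i => [_|]; exact: fB. Qed.

Lemma measurable_coord (i : 'I_n) : measurable_fun setT (fun e : E => e i).
Proof.
move=> _ B mB; rewrite setTI; apply: sub_sigma_algebra.
exists (fun j => if j == i then B else setT).
  by move=> j; case: eqP.
apply/seteqP; split => e /=; first by move/(_ i); rewrite eqxx.
by move=> Be j; case: eqP => // ->.
Qed.

Lemma measurable_fun_vec d (T : measurableType d) (f : 'I_n -> T -> R) :
  (forall i, measurable_fun setT (f i)) ->
  measurable_fun setT (fun w => (fun i => f i w) : E).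
Proof.
move=> mf; apply: (@measurability _ _ _ E _ _ boxes) => //.
move=> _ [_ [B mB <-] <-]; rewrite setTI preimage_box.
apply: fin_bigcap_measurable; first exact: finite_finset.
by move=> i _; rewrite -[X in measurable X]setTI; exact: mf.
Qed.

Lemma vec_law_eq_boxes d (T : measurableType d) (P : probability T R)
    (X Y : T -> E) :
  measurable_fun setT X -> measurable_fun setT Y ->
  (forall B, (forall i, measurable (B i)) -> P (X @^-1` box B) = P (Y @^-1` box B)) ->
  forall A : set E, measurable A -> P (X @^-1` A) = P (Y @^-1` A).
Proof.
move=> mX mY XY A mA.
apply: (@measure_unique _ R E boxes (fun=> setT) erefl setI_closed_boxes _ _
  (pushforward P X) (pushforward P Y) _ _ A mA).
- by move=> _; exists (fun=> setT) => //; apply/seteqP.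
- by apply/seteqP; split => // x _; exists 0%N.
- by move=> _ [B mB <-]; exact: XY.
- move=> _; change (P (X @^-1` setT) < +oo)%E.
  by rewrite preimage_setT probability_setT ltry.
Qed.

End boxes.

Notation vec_measurableType n R := (g_sigma_algebraType (@boxes R n)).

Lemma measurable_preimage_opp (R : realType) (B : set R) :
  measurable B -> measurable ((fun x => - x) @^-1` B).
Proof. by move=> mB; rewrite -[X in measurable X]setTI; exact: measurable_funN. Qed.

Lemma independent_symmetric_law_opp {d} {T : measurableType d} {R : realType}
    (P : probability T R) {n} (eps : 'I_n -> {RV P >-> R}) :
  mutually_independent eps ->
  (forall i (B : set R), measurable B ->
     P (eps i @^-1` ((fun x => - x) @^-1` B)) = P (eps i @^-1` B)) ->
  forall A : set (vec_measurableType n R), measurable A ->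
  P ((fun w => (fun i => eps i w) : vec n R) @^-1` A) =
  P ((fun w => (fun i => - eps i w) : vec n R) @^-1` A).
Proof.
move=> indep symm; apply: vec_law_eq_boxes.
- by apply: measurable_fun_vec => i; exact: measurable_funP.
- by apply: measurable_fun_vec => i; apply: measurable_funN; exact: measurable_funP.
move=> B mB; rewrite !preimage_box.
rewrite (indep _ mB) (indep (fun i => (fun x => - x) @^-1` B i)); last first.
  by move=> i; exact: measurable_preimage_opp.
by apply: eq_bigr => i _; rewrite symm.
Qed.

Section slopes.
Context {R : realType}.

Lemma size_slopes (y : 'I_5 -> R) : size (slopes y) = 10%N.
Proof.
rewrite /slopes size_map size_filter.
pose F := fun ij : 'I_5 * 'I_5 => (val ij.1, val ij.2).
rewrite (_ : count _ _ = count (fun ab : nat * nat => (ab.1 < ab.2)%N)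
   (map F [seq (i, j) | i <- enum 'I_5, j <- enum 'I_5])); last first.
  by rewrite count_map; apply: eq_count.
suff -> : map F [seq (i, j) | i <- enum 'I_5, j <- enum 'I_5] =
    [seq (a, b) | a <- iota 0 5, b <- iota 0 5] by [].
by rewrite map_allpairs -val_enum_ord allpairs_mapl allpairs_mapr.
Qed.

Lemma slopes_reflect (y : 'I_5 -> R) (a c : R) :
  slopes (fun i => a + c * xs i - y i) = [seq c - s | s <- slopes y].
Proof.
rewrite /slopes; set L := [seq ij <- _ | _]; rewrite -map_comp; apply/eq_in_map => -[i j].
rewrite mem_filter /= => /andP[ij _].
by rewrite /=; field; rewrite !nat1r subr_eq0 eqr_nat eqSS neq_ltn ij.
Qed.

Lemma sslope_reflect (y : 'I_5 -> R) (a c : R) k : (0 < k <= 10)%N ->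
  sslope (fun i => a + c * xs i - y i) k = c - sslope y (11 - k).
Proof.
move=> /andP[k_gt0 k_le10].
have size_sort_slopes : size (sort <=%R (slopes y)) = 10%N by rewrite size_sort size_slopes.
rewrite /sslope slopes_reflect sort_map_nonincr; last by move=> u v uv; rewrite lerB.
rewrite nth_rev size_map size_sort_slopes; last by lia.
by rewrite (nth_map 0) ?size_sort_slopes; [congr (_ - nth _ _ _); lia | lia].
Qed.

Lemma measurable_sslope (b0 b1 : R) k :
  measurable_fun setT (fun e : vec_measurableType 5 R => sslope (Ys b0 b1 e) k).
Proof.
pose h ij (e : vec_measurableType 5 R) :=
  (Ys b0 b1 e ij.1 - Ys b0 b1 e ij.2) / (xs ij.1 - xs ij.2).
rewrite /sslope /slopes; apply: (measurable_nth_sort h) => ij; rewrite /h /Ys.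
apply: measurable_funM; last exact: measurable_cst.
by apply: measurable_funB; apply: measurable_funD;
  (exact: measurable_cst || exact: measurable_coord).
Qed.

Lemma measurable_event_p2 (b0 b1 : R) :
  measurable (event_p2 b0 b1 (fun i (e : vec_measurableType 5 R) => e i)).
Proof.
pose s k (e : vec_measurableType 5 R) := sslope (Ys b0 b1 e) k.
have ms k : measurable_fun setT (s k) := measurable_sslope b0 b1 k.
have m2s k : measurable_fun setT (fun e => 2 * s k e).
  by apply: measurable_funM => //; exact: measurable_cst.
have msD k l : measurable_fun setT (fun e => s k e + s l e) by exact: measurable_funD.
have mb1 : measurable_fun setT (fun _ : vec_measurableType 5 R => b1) := measurable_cst _.
pose cond e :=
  [&& s 2 e < b1, b1 < s 10 e, 2 * s 2 e <= s 1 e + s 9 e & 2 * s 9 e < s 2 e + s 10 e].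
have mcond : measurable_fun setT cond.
  by repeat apply: measurable_and; (exact: measurable_fun_ltr || exact: measurable_fun_ler).
rewrite (_ : event_p2 _ _ _ = setT `&` cond @^-1` [set true]); first exact: mcond.
apply/seteqP; split => e /=.
  by move=> [/andP[? ?] ? ?]; split => //; apply/and4P.
by move=> [_ /and4P[? ? ? ?]]; split => //; apply/andP.
Qed.

Lemma Ys_opp (b0 b1 : R) (e : 'I_5 -> R) :
  Ys b0 b1 (fun i => - e i) = (fun i => 2 * b0 + 2 * b1 * xs i - Ys b0 b1 e i).
Proof. by apply/funext => i; rewrite /Ys; ring. Qed.

Lemma event_p3_reflect (T : Type) (b0 b1 : R) (eps : 'I_5 -> T -> R) :
  event_p3 b0 b1 eps = event_p2 b0 b1 (fun i w => - eps i w).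
Proof.
apply/seteqP; split => w; rewrite /event_p2 /event_p3 /= Ys_opp !sslope_reflect //=;
  by move=> [/andP[? ?] ? ?]; split; first (apply/andP; split); lra.
Qed.

End slopes.

Theorem theorem7 (d : measure_display) (T : measurableType d) (R : realType)
  (P : probability T R) (eps : 'I_5 -> {RV P >-> R}) (b0 b1 : R) :
  mutually_independent eps ->
  (forall (i : 'I_5) (B : set R), measurable B ->
     P (eps i @^-1` B) = P (eps ord0 @^-1` B)) ->
  (forall a : R, P (eps ord0 @^-1` [set a]) = 0%E) ->
  (forall B : set R, measurable B ->
     P (eps ord0 @^-1` ((fun x => - x) @^-1` B)) = P (eps ord0 @^-1` B)) ->
  P (event_p2 b0 b1 (fun i => eps i)) = P (event_p3 b0 b1 (fun i => eps i)).
Proof.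
move=> indep ident _ symm.
have symm_i (i : 'I_5) (B : set R) : measurable B ->
    P (eps i @^-1` ((fun x => - x) @^-1` B)) = P (eps i @^-1` B).
  by move=> mB; rewrite !ident ?symm //; exact: measurable_preimage_opp.
rewrite event_p3_reflect.
(* [event_p2 b0 b1 eps] is, by conversion, the preimage of the event at the
   coordinates under [w |-> (eps i w)_i]. *)
exact (independent_symmetric_law_opp P eps indep symm_i _ (measurable_event_p2 b0 b1)).
Qed.
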